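(* Let $\mathcal{M}=\{p(x\mid\theta):\ x\in\mathcal{X},\ \theta\in\Theta\}$ be a model that has a sufficient statistic $t=t(x)\in\mathcal{T}$ for $\theta$, let $\mathcal{P}$ be a class of priors, $\mathbf{X}=(x_1,\dots,x_M)$ data and $\gamma>0$. Let $T=(t(x_1),\dots,t(x_M))\in\mathcal{T}^M$ and let $\mathcal{M}_t=\{p(t\mid\theta):\ t\in\mathcal{T},\ \theta\in\Theta\}$ be the corresponding model in terms of $t$. Then \[ \pi_{\rm er}(\cdot\mid\mathcal{M},\mathcal{P},\mathbf{X},\gamma)=\pi_{\rm er}(\cdot\mid\mathcal{M}_t,\mathcal{P},T,\gamma), \] i.e. a density is an empirical reference prior for $(\mathcal{M},\mathcal{P},\mathbf{X},\gamma)$ if and only if it is one for $(\mathcal{M}_t,\mathcal{P},T,\gamma)$.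
   Context: For a model $\mathcal{N}=\{p(y\mid\theta)\}$ and prior $\pi$: $p(y\mid\pi)=\int p(y\mid\theta)\pi(\theta)\,\mathrm d\theta$; for data $\mathbf{Y}=(y_1,\dots,y_M)$ the marginal likelihood is $L(\pi\mid\mathcal{N},\mathbf{Y})=\prod_{m=1}^M p(y_m\mid\pi)$; $\mathcal{N}^k$ is the model of $k$ independent replications, $p(\vec y\mid\theta)=\prod_{i=1}^k p(y^{(i)}\mid\theta)$; the expected information is $\mathcal{I}[\pi\mid\mathcal{N}]=\int\int\pi(\theta)p(y\mid\theta)\log\big(p(y\mid\theta)/p(y\mid\pi)\big)\,\mathrm dy\,\mathrm d\theta$. A proper probability density $\pi\in\mathcal{P}$ is an empirical reference prior $\pi_{\rm er}(\cdot\mid\mathcal{N},\mathcal{P},\mathbf{Y},\gamma)$ if for every proper probability density $\tilde\pi\in\mathcal{P}$, $\lim_{k\to\infty}\big((\log L(\pi\mid\mathcal{N},\mathbf{Y})+\gamma\mathcal{I}[\pi\mid\mathcal{N}^k])-(\log L(\tilde\pi\mid\mathcal{N},\mathbf{Y})+\gamma\mathcal{I}[\tilde\pi\mid\mathcal{N}^k])\big)\ge 0$. *)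

From HB Require Import structures.
From mathcomp Require Import all_boot all_order all_algebra.
From mathcomp Require Import all_classical all_reals all_analysis.
Set Implicit Arguments. Unset Strict Implicit. Unset Printing Implicit Defensive.
Import Order.TTheory GRing.Theory Num.Theory.
Import numFieldNormedType.Exports.
Local Open Scope classical_set_scope.
Local Open Scope ring_scope.

Section EmpiricalReference.
Variable R : realType.

Definition is_model (dT dY : measure_display) (Th : measurableType dT)
  (Y : measurableType dY) (nu : {measure set Y -> \bar R}) (p : Th -> Y -> R) :=
  [/\ measurable_fun setT (fun z : Th * Y => p z.1 z.2),
      (forall th y, 0 <= p th y) &
      (forall th, (\int[nu]_y (p th y)%:E = 1)%E)].

Definition proper_prior (dT : measure_display) (Th : measurableType dT)
  (mu : {measure set Th -> \bar R}) (pi : Th -> R) :=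
  [/\ measurable_fun setT pi, (forall th, 0 <= pi th) &
      (\int[mu]_th (pi th)%:E = 1)%E].

(* q(s|theta) is the density (w.r.t. nuS) of the statistic s = t(x) when
   x ~ p(.|theta): the model M_t "in terms of t". *)
Definition stat_model (dT dX dS : measure_display) (Th : measurableType dT)
  (X : measurableType dX) (S : measurableType dS)
  (nuX : {measure set X -> \bar R}) (nuS : {measure set S -> \bar R})
  (p : Th -> X -> R) (t : X -> S) (q : Th -> S -> R) :=
  [/\ is_model nuS q, measurable_fun setT t &
      forall th (B : set S), measurable B ->
        (\int[nuX]_(x in t @^-1` B) (p th x)%:E = \int[nuS]_(s in B) (q th s)%:E)%E].

(* t is sufficient for theta: the conditional density of x given t(x),
   p(x|theta) / p(t(x)|theta), is a function h(x) not depending on theta. *)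
Definition sufficient (Th X S : Type) (p : Th -> X -> R) (t : X -> S)
  (q : Th -> S -> R) :=
  exists h : X -> R, (forall x, 0 <= h x) /\
    forall th x, p th x = q th (t x) * h x.

(* density of k independent replications, y = (y^(1),...,y^(k)) as a list *)
Definition pk (Th Y : Type) (p : Th -> Y -> R) (th : Th) (ys : seq Y) : R :=
  \prod_(y <- ys) p th y.

Definition marg (dT : measure_display) (Th : measurableType dT) (Y : Type)
  (mu : {measure set Th -> \bar R}) (f : Th -> Y -> R) (pi : Th -> R) (y : Y)
  : \bar R := (\int[mu]_th (f th y * pi th)%:E)%E.

(* iterated integral over Y^k w.r.t. the k-fold product nu^k of a
   nonnegative function (Tonelli) *)
Fixpoint iint (dY : measure_display) (Y : measurableType dY)
  (nu : {measure set Y -> \bar R}) (k : nat) (f : seq Y -> \bar R) : \bar R :=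
  match k with
  | 0 => f [::]
  | k'.+1 => (\int[nu]_y iint nu k' (fun ys => f (y :: ys)))%E
  end.

Definition kint (dY : measure_display) (Y : measurableType dY)
  (nu : {measure set Y -> \bar R}) (k : nat) (f : seq Y -> \bar R) : \bar R :=
  (iint nu k (fun ys => maxe (f ys) 0) - iint nu k (fun ys => maxe (- f ys) 0))%E.

Definition info (dT dY : measure_display) (Th : measurableType dT)
  (Y : measurableType dY) (mu : {measure set Th -> \bar R})
  (nu : {measure set Y -> \bar R}) (p : Th -> Y -> R) (pi : Th -> R) (k : nat)
  : \bar R :=
  (\int[mu]_th ((pi th)%:E *
     kint nu k (fun ys => (pk p th ys *
        ln (pk p th ys / fine (marg mu (pk p) pi ys)))%:E)))%E.

Definition logL (dT : measure_display) (Th : measurableType dT) (Y : Type)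
  (mu : {measure set Th -> \bar R}) (p : Th -> Y -> R) (pi : Th -> R)
  (ys : seq Y) : \bar R :=
  lne (\prod_(y <- ys) marg mu p pi y)%E.

Definition emp_ref_prior (dT dY : measure_display) (Th : measurableType dT)
  (Y : measurableType dY) (mu : {measure set Th -> \bar R})
  (nu : {measure set Y -> \bar R}) (p : Th -> Y -> R) (P : set (Th -> R))
  (ys : seq Y) (gamma : R) (pi : Th -> R) :=
  [/\ P pi, proper_prior mu pi &
    forall pi' : Th -> R, P pi' -> proper_prior mu pi' ->
      exists2 l : \bar R,
        (fun k : nat => (logL mu p pi ys + gamma%:E * info mu nu p pi k)
                   - (logL mu p pi' ys + gamma%:E * info mu nu p pi' k))%E
          @ \oo --> l
        & (0 <= l)%E].

End EmpiricalReference.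

From HB Require Import structures.
From mathcomp Require Import all_boot all_order all_algebra.
From mathcomp Require Import all_classical all_reals all_analysis measurable_realfun.
Import Order.TTheory GRing.Theory Num.Theory.
Import numFieldNormedType.Exports.
Import HBNNSimple.
Local Open Scope classical_set_scope.
Local Open Scope ring_scope.
Set Implicit Arguments. Unset Strict Implicit.

(* Sufficiency gives p(x|th) = q(t x|th) h(x) with h >= 0 free of th, hence
   p(x|pi) = h(x) q(t x|pi).  The log marginal likelihood of the data is
   therefore that of the statistics shifted by the finite constant
   sum_m ln h(x_m), which does not depend on the prior and cancels in the
   defining difference.  In the information integrand the factor prod_i h(y_i)
   cancels inside the logarithm, leaving p_k(y|th) L(t y) for a measurable L;
   since t pushes p(.|th) nuX forward to q(.|th) nuS, integrating over X^k one
   coordinate at a time turns it into the integral of q_k(s|th) L(s) over S^k.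
   So both criteria compare the same sequences. *)

Lemma measurable_inv (R : realType) : measurable_fun [set: R] (@GRing.inv R).
Proof.
have -> : [set: R] = [set 0] `|` ~` [set 0] by rewrite setUCr.
apply/measurable_funU => //; first exact: measurableC.
split.
  move=> _ B mB; have [B0|B0] := pselect (B 0).
    rewrite (_ : _ `&` _ = [set 0]) //; apply/seteqP; split => [x [-> //]|x ->].
    by split => //=; rewrite invr0.
  rewrite (_ : _ `&` _ = set0) //; apply/seteqP; split => [x [/= ->]|x //].
  by rewrite invr0.
apply: open_continuous_measurable_fun.
  rewrite openC.
  by apply: accessible_closed_set1; apply: hausdorff_accessible; exact: Rhausdorff.
by move=> x; rewrite inE /= => /eqP x0; exact: inv_continuous.
Qed.

Lemma sigma_finite_measurable_fun_fubini_F (R : realType) d1 d2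
    (T1 : measurableType d1) (T2 : measurableType d2)
    (m2 : {measure set T2 -> \bar R}) (f : T1 * T2 -> \bar R) :
  sigma_finite setT m2 -> measurable_fun [set: T1 * T2] f ->
  (forall z, (0 <= f z)%E) ->
  measurable_fun setT (fun x => (\int[m2]_y f (x, y))%E).
Proof.
move=> m2_sfin mf f0.
pose m2' := HB.pack_for (SigmaFiniteMeasure.type T2 R) (Measure.sort m2)
  (isSFinite.Build _ _ _ _ (sfinite_measure_sigma_finite m2_sfin))
  (isSigmaFinite.Build _ _ _ _ m2_sfin).
exact: (@measurable_fun_fubini_tonelli_F _ _ T1 T2 R m2' f mf f0).
Qed.

(* There is no product sigma-algebra on [seq Y]; [seq_measurable k F] says that
   (z, y_1, ..., y_k) |-> F z [:: y_1; ...; y_k] is measurable on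
   T * Y * ... * Y, by currying one coordinate at a time into the parameter. *)
Fixpoint seq_measurable (k : nat) {dY} {Y : measurableType dY} {d}
    {T : measurableType d} {du} {U : measurableType du}
    (F : T -> seq Y -> U) {struct k} : Prop :=
  match k with
  | 0 => measurable_fun setT (fun z => F z [::])
  | k'.+1 => seq_measurable k' (fun (zy : T * Y) ys => F zy.1 (zy.2 :: ys))
  end.

Section SeqMeasurable.
Context {dY} {Y : measurableType dY}.

Lemma seq_measurable_precomp k d (T : measurableType d) d' (T' : measurableType d')
    du (U : measurableType du) (F : T -> seq Y -> U) (phi : T' -> T) :
  measurable_fun setT phi -> seq_measurable k F ->
  seq_measurable k (fun z ys => F (phi z) ys).
Proof.
elim: k d T d' T' F phi => [|k IH] d T d' T' F phi mphi /=.
  by move=> mF; exact: measurableT_comp mF mphi.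
move=> mF; apply: (IH _ _ _ _ _ (fun zy : T' * Y => (phi zy.1, zy.2)) _ mF).
apply: measurable_fun_pair => //; exact: measurableT_comp mphi measurable_fst.
Qed.

Lemma seq_measurable_comp k d (T : measurableType d) du (U : measurableType du)
    dv (V : measurableType dv) (F : T -> seq Y -> U) (g : U -> V) :
  measurable_fun setT g -> seq_measurable k F ->
  seq_measurable k (fun z ys => g (F z ys)).
Proof.
elim: k d T F => [|k IH] d T F mg /=; first by move=> mF; exact: measurableT_comp mg mF.
by move=> mF; exact: (IH _ _ _ mg mF).
Qed.

Lemma seq_measurable_cst k d (T : measurableType d) du (U : measurableType du)
    (F : T -> U) :
  measurable_fun setT F -> seq_measurable k (fun z (_ : seq Y) => F z).
Proof.
elim: k d T F => [|k IH] d T F mF //=.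
by apply: IH; exact: measurableT_comp mF measurable_fst.
Qed.

Lemma seq_measurable_pair k d (T : measurableType d) du (U : measurableType du)
    dv (V : measurableType dv) (F : T -> seq Y -> U) (G : T -> seq Y -> V) :
  seq_measurable k F -> seq_measurable k G ->
  seq_measurable k (fun z ys => (F z ys, G z ys)).
Proof.
elim: k d T F G => [|k IH] d T F G /=; first exact: measurable_fun_pair.
exact: IH.
Qed.

Lemma seq_measurableM (R : realType) k d (T : measurableType d)
    (F G : T -> seq Y -> R) :
  seq_measurable k F -> seq_measurable k G ->
  seq_measurable k (fun z ys => F z ys * G z ys).
Proof.
move=> mF mG.
apply: (seq_measurable_comp (g := fun r : R * R => r.1 * r.2)
  _ (seq_measurable_pair mF mG)).
by apply: measurable_funM; [exact: measurable_fst|exact: measurable_snd].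
Qed.

Lemma seq_emeasurableM (R : realType) k d (T : measurableType d)
    (F G : T -> seq Y -> \bar R) :
  seq_measurable k F -> seq_measurable k G ->
  seq_measurable k (fun z ys => (F z ys * G z ys)%E).
Proof.
move=> mF mG.
apply: (seq_measurable_comp (g := fun r : \bar R * \bar R => (r.1 * r.2)%E)
  _ (seq_measurable_pair mF mG)).
by apply: emeasurable_funM; [exact: measurable_fst|exact: measurable_snd].
Qed.

Lemma seq_measurable_integral (R : realType) k d (T : measurableType d)
    dT (Th : measurableType dT) (m : {measure set Th -> \bar R})
    (F : T * Th -> seq Y -> \bar R) :
  sigma_finite setT m -> (forall z ys, (0 <= F z ys)%E) -> seq_measurable k F ->
  seq_measurable k (fun z ys => (\int[m]_th F (z, th) ys)%E).
Proof.
move=> m_sfin; elim: k d T F => [|k IH] d T F F0 /=.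
  by move=> mF; exact: (sigma_finite_measurable_fun_fubini_F m_sfin mF (F0^~ [::])).
move=> mF; apply: (IH _ _ (fun (w : (T * Y) * Th) ys => F (w.1.1, w.2) (w.1.2 :: ys))).
  by move=> *; exact: F0.
apply: (seq_measurable_precomp
  (phi := fun w : (T * Y) * Th => ((w.1.1, w.2), w.1.2)) _ mF).
apply: measurable_fun_pair.
  apply: measurable_fun_pair; last exact: measurable_snd.
  exact: measurableT_comp measurable_fst measurable_fst.
exact: measurableT_comp measurable_snd measurable_fst.
Qed.

Lemma iint_ge0 (R : realType) k (nu : {measure set Y -> \bar R}) (F : seq Y -> \bar R) :
  (forall ys, (0 <= F ys)%E) -> (0 <= iint nu k F)%E.
Proof.
elim: k F => [|k IH] F F0 /=; first exact: F0.
by apply: integral_ge0 => y _; apply: IH => ys; exact: F0.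
Qed.

Lemma measurable_iint (R : realType) k d (T : measurableType d)
    (nu : {measure set Y -> \bar R}) (F : T -> seq Y -> \bar R) :
  sigma_finite setT nu -> (forall z ys, (0 <= F z ys)%E) -> seq_measurable k F ->
  measurable_fun setT (fun z => iint nu k (F z)).
Proof.
move=> nu_sfin; elim: k d T F => [|k IH] d T F F0 //= mF.
have := IH _ _ _ (fun _ _ => F0 _ _) mF.
move/(sigma_finite_measurable_fun_fubini_F nu_sfin); apply => z.
by apply: iint_ge0 => ys; exact: F0.
Qed.

Lemma iintZl (R : realType) k (nu : {measure set Y -> \bar R})
    d (T : measurableType d) (F : T -> seq Y -> \bar R) (z : T) (c : R) :
  sigma_finite setT nu -> (forall z ys, (0 <= F z ys)%E) -> seq_measurable k F ->
  0 <= c -> iint nu k (fun ys => c%:E * F z ys)%E = (c%:E * iint nu k (F z))%E.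
Proof.
move=> nu_sfin; elim: k d T F z => [|k IH] d T F z F0 //= mF c0.
pose F' := fun (zy : T * Y) ys => F zy.1 (zy.2 :: ys).
have F'0 zy ys : (0 <= F' zy ys)%E by exact: F0.
under eq_integral => y _ do rewrite (IH _ _ F' (z, y) F'0 mF c0).
apply: ge0_integralZl_EFin => //; first by move=> y _; exact: iint_ge0.
apply: (measurableT_comp (measurable_iint nu_sfin F'0 mF)).
exact: measurable_fun_pair.
Qed.

Lemma seq_measurable_pk (R : realType) k dT (Th : measurableType dT)
    d (T : measurableType d) (p : Th -> Y -> R) (g : T -> Th) :
  measurable_fun setT (fun z : Th * Y => p z.1 z.2) -> measurable_fun setT g ->
  seq_measurable k (fun z ys => pk p (g z) ys).
Proof.
move=> mp; elim: k d T g => [|k IH] d T g mg /=.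
  by rewrite /pk; under eq_fun do rewrite big_nil; exact: measurable_cst.
rewrite /pk; under eq_fun do under eq_fun do rewrite big_cons.
have mg1 : measurable_fun setT (fun zy : T * Y => g zy.1).
  exact: measurableT_comp mg measurable_fst.
apply: seq_measurableM; last exact: IH.
apply: seq_measurable_cst.
exact: measurableT_comp mp (measurable_fun_pair mg1 measurable_snd).
Qed.

End SeqMeasurable.

Lemma seq_measurable_map k dX (X : measurableType dX) dY (Y : measurableType dY)
    d (T : measurableType d) du (U : measurableType du) (t : X -> Y)
    (F : T -> seq Y -> U) :
  measurable_fun setT t -> seq_measurable k F ->
  seq_measurable k (fun z (xs : seq X) => F z (map t xs)).
Proof.
move=> mt; elim: k d T F => [|k IH] d T F //= mF.
have := IH _ _ _ mF.
move/(seq_measurable_precomp (phi := fun zx : T * X => (zx.1, t zx.2))); apply.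
apply: measurable_fun_pair => //; exact: measurableT_comp mt measurable_snd.
Qed.

Lemma measurable_pk (R : realType) dT (Th : measurableType dT)
    dY (Y : measurableType dY) (p : Th -> Y -> R) (ys : seq Y) :
  measurable_fun setT (fun z : Th * Y => p z.1 z.2) ->
  measurable_fun setT (fun th => pk p th ys).
Proof.
move=> mp; elim: ys => [|y ys IH]; rewrite /pk.
  by under eq_fun do rewrite big_nil; exact: measurable_cst.
under eq_fun do rewrite big_cons; apply: measurable_funM => //.
exact: (measurable_fun_pair1 (f := fun z : Th * Y => p z.1 z.2)).
Qed.

Lemma ge0_integral_mul_nnsfun_comp (R : realType) dT (T : measurableType dT)
    dS (S : measurableType dS) (m : {measure set T -> \bar R}) (f : T -> R)
    (phi : T -> S) (h : {nnsfun S >-> R}) :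
  measurable_fun setT f -> (forall x, 0 <= f x) -> measurable_fun setT phi ->
  (\int[m]_x ((f x)%:E * (h (phi x))%:E) =
   \sum_(r \in range h) (r%:E * \int[m]_(x in phi @^-1` (h @^-1` [set r])) (f x)%:E))%E.
Proof.
move=> mf f0 mphi.
have mA r : measurable (phi @^-1` (h @^-1` [set r])).
  by rewrite -[X in measurable X]setTI; apply: mphi.
transitivity (\int[m]_x (\sum_(r \in range h)
    (f x * (r * \1_(phi @^-1` (h @^-1` [set r])) x))%:E))%E.
  apply: eq_integral => x _; rewrite fsumEFin // -mulr_fsumr -EFinM.
  by rewrite (fimfunE h (phi x)).
rewrite ge0_integral_fsum //; last 2 first.
- move=> r; apply/measurable_EFinP; apply: measurable_funM => //.
  by apply: measurable_funM; [exact: measurable_cst|exact: measurable_indic].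
- move=> r x _; rewrite lee_fin indicE; case: (boolP (x \in _)) => [|_].
    by rewrite inE /= => <-; rewrite mulr1 mulr_ge0.
  by rewrite !mulr0.
apply: eq_fsbigr => r; rewrite inE => -[s _ <-].
under eq_integral do rewrite mulrCA EFinM.
rewrite ge0_integralZl_EFin //.
- congr (_ * _)%E; rewrite [RHS]integral_mkcond epatch_indic.
  by apply: eq_integral => x _; rewrite /= EFinM.
- by move=> x _; rewrite lee_fin mulr_ge0.
- by apply/measurable_EFinP; apply: measurable_funM.
Qed.

(* Approximate [Psi] by simple functions: on each level set the hypothesis on
   preimages applies, and monotone convergence passes to the limit. *)
Lemma ge0_integral_pushforward_density (R : realType) dX (X : measurableType dX)
    dS (S : measurableType dS) (nuX : {measure set X -> \bar R})
    (nuS : {measure set S -> \bar R}) (t : X -> S) (f : X -> R) (g : S -> R)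
    (Psi : S -> \bar R) :
  measurable_fun setT t -> measurable_fun setT f -> measurable_fun setT g ->
  (forall x, 0 <= f x) -> (forall s, 0 <= g s) ->
  (forall B, measurable B ->
     (\int[nuX]_(x in t @^-1` B) (f x)%:E = \int[nuS]_(s in B) (g s)%:E)%E) ->
  measurable_fun setT Psi -> (forall s, (0 <= Psi s)%E) ->
  (\int[nuX]_x ((f x)%:E * Psi (t x)) = \int[nuS]_s ((g s)%:E * Psi s))%E.
Proof.
move=> mt mf mg f0 g0 tfg mPsi Psi0.
pose h := nnsfun_approx measurableT mPsi.
have int_h n : (\int[nuX]_x ((f x)%:E * (h n (t x))%:E) =
                \int[nuS]_s ((g s)%:E * (h n s)%:E))%E.
  rewrite (ge0_integral_mul_nnsfun_comp nuX (h n) mf f0 mt).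
  rewrite (ge0_integral_mul_nnsfun_comp nuS (h n) mg g0 (@measurable_id _ S setT)).
  by apply: eq_fsbigr => r _; rewrite preimage_id tfg.
have lim_h (T' : Type) (w : T' -> R) (u : T' -> S) y :
    ((w y)%:E * Psi (u y) = limn (fun n => (w y)%:E * (h n (u y))%:E))%E.
  apply/esym/cvg_lim => //; apply: cvgeZl => //.
  exact: (cvg_nnsfun_approx measurableT mPsi (fun x _ => Psi0 x) (x := u y) I).
have mono (T' : Type) (w : T' -> R) (u : T' -> S) y : (0 <= w y) ->
    {homo (fun n => (w y)%:E * (h n (u y))%:E)%E : a b / (a <= b)%N >-> (a <= b)%E}.
  move=> w0 a b ab; apply: lee_wpmul2l; first by rewrite lee_fin.
  by rewrite lee_fin; exact/lefP/nd_nnsfun_approx.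
transitivity (limn (fun n => \int[nuX]_x ((f x)%:E * (h n (t x))%:E)))%E.
  under eq_integral do rewrite (lim_h _ f t).
  apply: monotone_convergence => //.
  - move=> n; apply/measurable_EFinP; apply: measurable_funM => //.
    exact: measurableT_comp.
  - by move=> n x _; rewrite mule_ge0 // lee_fin.
  - by move=> x _; apply: mono.
under eq_fun do rewrite int_h.
under [RHS]eq_integral do rewrite (lim_h _ g id).
apply/esym/monotone_convergence => //.
- by move=> n; apply/measurable_EFinP; apply: measurable_funM.
- by move=> n x _; rewrite mule_ge0 // lee_fin.
- by move=> x _; apply: mono.
Qed.

Section PkIntegrals.
Variables (R : realType) (dT dY : measure_display).
Variables (Th : measurableType dT) (Y : measurableType dY).
Variables (nu : {measure set Y -> \bar R}) (p : Th -> Y -> R).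
Hypothesis nu_sfin : sigma_finite setT nu.
Hypothesis mp : measurable_fun setT (fun z : Th * Y => p z.1 z.2).
Hypothesis p0 : forall th y, 0 <= p th y.

Lemma seq_measurable_EFin_pk k d (T : measurableType d) (th : Th) :
  seq_measurable k (fun (_ : T) ys => (pk p th ys)%:E).
Proof.
apply: (seq_measurable_comp (g := EFin)) => //.
exact: (seq_measurable_pk (g := fun _ : T => th) k mp (measurable_cst th)).
Qed.

Lemma iint_pk_cons k d (T : measurableType d) (F : T -> seq Y -> \bar R) th z :
  (forall z ys, (0 <= F z ys)%E) -> seq_measurable k.+1 F ->
  iint nu k.+1 (fun ys => (pk p th ys)%:E * F z ys)%E =
  (\int[nu]_y ((p th y)%:E * iint nu k (fun ys => (pk p th ys)%:E * F z (y :: ys))))%E.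
Proof.
move=> F0 mF /=; apply: eq_integral => y _.
pose G := fun (zy : T * Y) ys => ((pk p th ys)%:E * F zy.1 (zy.2 :: ys))%E.
have G0 zy ys : (0 <= G zy ys)%E.
  by rewrite mule_ge0 ?F0 // lee_fin; apply: prodr_ge0.
have mG : seq_measurable k G.
  by apply: seq_emeasurableM => //; exact: seq_measurable_EFin_pk.
rewrite -(iintZl (z, y) nu_sfin G0 mG (p0 th y)).
by congr (iint _ _ _); apply/funext => ys; rewrite /G /pk big_cons EFinM muleA.
Qed.

End PkIntegrals.

Lemma pk_factor (R : realType) (Th X S : Type) (p : Th -> X -> R) (q : Th -> S -> R)
    (t : X -> S) (h : X -> R) th ys :
  (forall th x, p th x = q th (t x) * h x) ->
  pk p th ys = pk q th (map t ys) * \prod_(y <- ys) h y.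
Proof.
by move=> hp; rewrite /pk big_map -big_split; apply: eq_bigr => y _; exact: hp.
Qed.

Lemma marg_factor (R : realType) dT (Th : measurableType dT) (Y Z : Type)
    (mu : {measure set Th -> \bar R}) (pi : Th -> R)
    (f : Th -> Y -> R) (g : Th -> Z -> R) (u : Y -> Z) (c : Y -> R) y :
  measurable_fun setT pi -> (forall th, 0 <= pi th) ->
  (forall y, 0 <= c y) -> (forall th z, 0 <= g th z) ->
  (forall z, measurable_fun setT (fun th => g th z)) ->
  (forall th y, f th y = g th (u y) * c y) ->
  marg mu f pi y = ((c y)%:E * marg mu g pi (u y))%E.
Proof.
move=> mpi pi0 c0 g0 mg hf; rewrite /marg.
under eq_integral do rewrite hf -mulrA mulrCA EFinM.
rewrite ge0_integralZl_EFin //.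
  by move=> th _; rewrite lee_fin mulr_ge0.
by apply/measurable_EFinP; apply: measurable_funM.
Qed.

Lemma logL_factor (R : realType) dT (Th : measurableType dT) (X : eqType) (S : Type)
    (mu : {measure set Th -> \bar R}) (pi : Th -> R)
    (p : Th -> X -> R) (q : Th -> S -> R) (t : X -> S) (h : X -> R) (xs : seq X) :
  measurable_fun setT pi -> (forall th, 0 <= pi th) ->
  (forall x, 0 <= h x) -> (forall th s, 0 <= q th s) ->
  (forall s, measurable_fun setT (fun th => q th s)) ->
  (forall th x, p th x = q th (t x) * h x) ->
  (forall x, x \in xs -> 0 < h x) ->
  logL mu p pi xs = ((ln (\prod_(x <- xs) h x))%:E + logL mu q pi (map t xs))%E.
Proof.
move=> mpi pi0 h0 q0 mq hp hxs_pos; rewrite /logL big_map.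
rewrite [in LHS](eq_bigr (fun y => ((h y)%:E * marg mu q pi (t y))%E)); last first.
  by move=> y _; exact: marg_factor mpi pi0 h0 q0 mq hp.
rewrite big_split /= -(big_morph _ EFinM erefl).
set H := \prod_(x <- xs) h x.
set M := (\prod_(x <- xs) marg mu q pi (t x))%E.
have H_gt0 : 0 < H by rewrite /H big_seq; apply: prodr_gt0 => x /hxs_pos.
have M_ge0 : (0 <= M)%E.
  by apply: prode_ge0 => s _; apply: integral_ge0 => th _; rewrite lee_fin mulr_ge0.
have [->|M_neq0] := eqVneq M 0%E; first by rewrite mule0 le0_lneNy // addeNy.
rewrite lneM ?lne_EFin // in_itv /= ?lte_fin ?H_gt0 ?leey //.
by rewrite lt_def M_neq0 M_ge0.
Qed.

(* No hypothesis on [m] is needed: for [c = 0] both sides vanish through the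
   prefactor, whatever junk values [fine] and division by 0 produce. *)
Lemma ratio_scale_cancel (R : realType) (a c : R) (m : \bar R) (l : R -> R) :
  0 <= c -> (a * c) * l ((a * c) / fine (c%:E * m)%E) = (a * c) * l (a / fine m).
Proof.
move=> c0; have [->|c_neq0] := eqVneq c 0; first by rewrite !mulr0 !mul0r.
have c_gt0 : 0 < c by rewrite lt_def c_neq0 c0.
congr (_ * l _).
have -> : fine (c%:E * m)%E = c * fine m.
  case: m => [r| |] /=; first by rewrite -?EFinM.
    by rewrite mulry gtr0_sg // mul1e /= mulr0.
  by rewrite mulrNy gtr0_sg // mul1e /= mulr0.
by rewrite invfM mulrA -(mulrA a c) mulfV // mulr1.
Qed.

Section StatisticModel.
Variables (R : realType) (dT dX dS : measure_display).
Variables (Th : measurableType dT) (X : measurableType dX) (S : measurableType dS).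
Variables (nuX : {measure set X -> \bar R}) (nuS : {measure set S -> \bar R}).
Variables (p : Th -> X -> R) (t : X -> S) (q : Th -> S -> R).
Hypothesis nuX_sfin : sigma_finite setT nuX.
Hypothesis nuS_sfin : sigma_finite setT nuS.
Hypothesis mp : measurable_fun setT (fun z : Th * X => p z.1 z.2).
Hypothesis mq : measurable_fun setT (fun z : Th * S => q z.1 z.2).
Hypothesis mt : measurable_fun setT t.
Hypothesis p0 : forall th x, 0 <= p th x.
Hypothesis q0 : forall th s, 0 <= q th s.
Hypothesis tpq : forall th B, measurable B ->
  (\int[nuX]_(x in t @^-1` B) (p th x)%:E = \int[nuS]_(s in B) (q th s)%:E)%E.

Lemma iint_pk_map k d (T : measurableType d) (Phi : T -> seq S -> \bar R) th z :
  (forall z ss, (0 <= Phi z ss)%E) -> seq_measurable k Phi ->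
  iint nuX k (fun ys => (pk p th ys)%:E * Phi z (map t ys))%E =
  iint nuS k (fun ss => (pk q th ss)%:E * Phi z ss)%E.
Proof.
elim: k d T Phi z => [|k IH] d T Phi z Phi0 mPhi; first by rewrite /= /pk !big_nil.
pose Phi' := fun (zs : T * S) ss => Phi zs.1 (zs.2 :: ss).
pose Psi := fun s => iint nuS k (fun ss => (pk q th ss)%:E * Phi' (z, s) ss)%E.
have Psi0 s : (0 <= Psi s)%E.
  by apply: iint_ge0 => ss; rewrite /= mule_ge0 ?Phi0 // lee_fin; apply: prodr_ge0.
have mPsi : measurable_fun setT Psi.
  apply: (measurable_iint (F := fun s ss => (pk q th ss)%:E * Phi' (z, s) ss)%E) => //.
    by move=> s ss; rewrite mule_ge0 ?Phi0 // lee_fin; apply: prodr_ge0.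
  apply: seq_emeasurableM; first exact: seq_measurable_EFin_pk.
  apply: (seq_measurable_precomp (phi := fun s => (z, s))) => //.
  exact: measurable_fun_pair.
rewrite (iint_pk_cons nuX_sfin mp p0 (F := fun z ys => Phi z (map t ys)) th z) //;
  last exact: seq_measurable_map mt mPhi.
rewrite (iint_pk_cons nuS_sfin mq q0 (F := Phi) th z) //.
transitivity (\int[nuX]_x ((p th x)%:E * Psi (t x)))%E.
  apply: eq_integral => x _.
  by rewrite /Psi -(IH _ _ Phi' (z, t x) (fun _ _ => Phi0 _ _) mPhi).
apply: ge0_integral_pushforward_density => //.
- exact: (measurable_fun_pair2 (f := fun z : Th * X => p z.1 z.2)).
- exact: (measurable_fun_pair2 (f := fun z : Th * S => q z.1 z.2)).
- exact: tpq.
Qed.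


Lemma kint_pk_map k d (T : measurableType d) (L : T -> seq S -> R) th z :
  seq_measurable k L ->
  kint nuX k (fun ys => (pk p th ys * L z (map t ys))%:E) =
  kint nuS k (fun ss => (pk q th ss * L z ss)%:E).
Proof.
move=> mL.
have iint_homo (g : R -> R) : measurable_fun setT g -> (forall l, 0 <= g l) ->
    (forall a l, 0 <= a -> g (a * l) = a * g l) ->
    iint nuX k (fun ys => (g (pk p th ys * L z (map t ys)))%:E) =
    iint nuS k (fun ss => (g (pk q th ss * L z ss))%:E).
  move=> mg g0 gZ.
  have -> : (fun ys => (g (pk p th ys * L z (map t ys)))%:E) =
            (fun ys => (pk p th ys)%:E * (g (L z (map t ys)))%:E)%E.
    by apply/funext => ys; rewrite gZ ?EFinM //; apply: prodr_ge0.
  have -> : (fun ss => (g (pk q th ss * L z ss))%:E) =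
            (fun ss => (pk q th ss)%:E * (g (L z ss))%:E)%E.
    by apply/funext => ss; rewrite gZ ?EFinM //; apply: prodr_ge0.
  apply: (iint_pk_map (Phi := fun z ss => (g (L z ss))%:E)) => [z' ss|].
    by rewrite lee_fin.
  apply: (seq_measurable_comp (g := fun x => (g x)%:E)) => //.
  exact/measurable_EFinP.
rewrite /kint; congr (_ - _)%E.
- under [X in iint nuX k X]eq_fun do rewrite -EFin_max.
  under [X in iint nuS k X]eq_fun do rewrite -EFin_max.
  apply: (iint_homo (fun x => Num.max x 0)) => [|l|a l a0].
  + exact: measurable_maxr.
  + by rewrite le_max lexx orbT.
  + by rewrite maxr_pMr ?mulr0.
- under [X in iint nuX k X]eq_fun do rewrite -EFinN -EFin_max.
  under [X in iint nuS k X]eq_fun do rewrite -EFinN -EFin_max.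
  apply: (iint_homo (fun x => Num.max (- x) 0)) => [|l|a l a0].
  + by apply: measurable_maxr => //; exact: measurable_funN.
  + by rewrite le_max lexx orbT.
  + by rewrite -mulrN maxr_pMr ?mulr0.
Qed.

Variables (mu : {measure set Th -> \bar R}) (pi : Th -> R) (h : X -> R).
Hypothesis mu_sfin : sigma_finite setT mu.
Hypothesis mpi : measurable_fun setT pi.
Hypothesis pi0 : forall th, 0 <= pi th.
Hypothesis h0 : forall x, 0 <= h x.
Hypothesis hp : forall th x, p th x = q th (t x) * h x.

Lemma pk_ln_ratio_factor th ys :
  pk p th ys * ln (pk p th ys / fine (marg mu (pk p) pi ys)) =
  pk p th ys * ln (pk q th (map t ys) / fine (marg mu (pk q) pi (map t ys))).
Proof.
have prod_h0 zs : 0 <= \prod_(z <- zs) h z by apply: prodr_ge0.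
have -> : marg mu (pk p) pi ys =
          ((\prod_(z <- ys) h z)%:E * marg mu (pk q) pi (map t ys))%E.
  apply: (marg_factor (g := pk q) (c := fun zs => \prod_(z <- zs) h z) mu ys mpi pi0)
    => // [th' ss|ss|th' zs]; first exact: prodr_ge0.
    exact: measurable_pk.
  exact: pk_factor.
by rewrite (pk_factor _ _ hp) ratio_scale_cancel.
Qed.

Lemma seq_measurable_ln_ratio k :
  seq_measurable k (fun th ss => ln (pk q th ss / fine (marg mu (pk q) pi ss))).
Proof.
apply: (seq_measurable_comp (g := @ln R)); first exact: measurable_ln.
apply: seq_measurableM.
  by apply: (seq_measurable_pk (g := fun th => th) k mq); exact: measurable_id.
apply: (seq_measurable_comp (g := @GRing.inv R)); first exact: measurable_inv.
apply: (seq_measurable_comp (g := @fine R)); first exact: fine_measurable.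
pose F := fun (w : Th * Th) (ss : seq S) => (pk q w.2 ss * pi w.2)%:E.
have F0 w ss : (0 <= F w ss)%E by rewrite lee_fin mulr_ge0 //; apply: prodr_ge0.
apply: (seq_measurable_integral (F := F)) => //.
apply: (seq_measurable_comp (g := EFin)) => //; apply: seq_measurableM.
  exact: (seq_measurable_pk (g := snd) k mq measurable_snd).
by apply: seq_measurable_cst; exact: measurableT_comp mpi measurable_snd.
Qed.

Lemma info_stat_model k : info mu nuX p pi k = info mu nuS q pi k.
Proof.
rewrite /info; apply: eq_integral => th _; congr (_ * _)%E.
under eq_fun do rewrite pk_ln_ratio_factor.
exact: (kint_pk_map th th (seq_measurable_ln_ratio k)).
Qed.

End StatisticModel.

Lemma EFin_addeKA (R : realType) (c : R) (a b a' b' : \bar R) :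
  (((c%:E + a) + b) - ((c%:E + a') + b') = (a + b) - (a' + b'))%E.
Proof.
rewrite -!addeA oppeD; last exact: fin_num_adde_defr.
by rewrite (addeCA b) (addeCA a) addeA subee // add0e.
Qed.

Unset Implicit Arguments.
Set Strict Implicit.

Theorem theorem4 (R : realType) (dT dX dS : measure_display)
  (Th : measurableType dT) (X : measurableType dX) (S : measurableType dS)
  (mu : {measure set Th -> \bar R}) (nuX : {measure set X -> \bar R})
  (nuS : {measure set S -> \bar R})
  (p : Th -> X -> R) (t : X -> S) (q : Th -> S -> R)
  (P : set (Th -> R)) (xs : seq X) (gamma : R) :
  sigma_finite setT mu -> sigma_finite setT nuX -> sigma_finite setT nuS ->
  is_model nuX p ->
  stat_model nuX nuS p t q ->
  sufficient p t q ->
  (forall x, x \in xs -> exists th, 0 < p th x) ->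
  0 < gamma ->
  forall pi : Th -> R,
    emp_ref_prior mu nuX p P xs gamma pi <->
    emp_ref_prior mu nuS q P (map t xs) gamma pi.
Proof.
move=> mu_sfin nuX_sfin nuS_sfin [mp p0 _] [[mq q0 _] mt tpq] [h [h0 hp]] xs_supp _ pi.
have h_gt0 x : x \in xs -> 0 < h x.
  move=> /xs_supp[th]; rewrite hp => qh_gt0; rewrite lt_def h0 andbT.
  by apply: contraTneq qh_gt0 => ->; rewrite mulr0 ltxx.
have mq_th s : measurable_fun setT (fun th => q th s).
  exact: (measurable_fun_pair1 (f := fun z : Th * S => q z.1 z.2)).
have criterion_eq pi1 pi2 : proper_prior mu pi1 -> proper_prior mu pi2 ->
    (fun k => (logL mu p pi1 xs + gamma%:E * info mu nuX p pi1 k)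
            - (logL mu p pi2 xs + gamma%:E * info mu nuX p pi2 k))%E =
    (fun k => (logL mu q pi1 (map t xs) + gamma%:E * info mu nuS q pi1 k)
            - (logL mu q pi2 (map t xs) + gamma%:E * info mu nuS q pi2 k))%E.
  move=> [mpi1 pi10 _] [mpi2 pi20 _]; apply/funext => k.
  have info_eq := info_stat_model nuX_sfin nuS_sfin mp mq mt p0 q0 tpq mu_sfin.
  rewrite (logL_factor mu mpi1 pi10 h0 q0 mq_th hp h_gt0).
  rewrite (logL_factor mu mpi2 pi20 h0 q0 mq_th hp h_gt0).
  by rewrite (info_eq _ _ mpi1 pi10 h0 hp) (info_eq _ _ mpi2 pi20 h0 hp) EFin_addeKA.
split=> -[Ppi pi_proper pi_crit]; split=> // pi' Ppi' pi'_proper.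
- have [l pi_cvg l_ge0] := pi_crit pi' Ppi' pi'_proper.
  by exists l; rewrite // -criterion_eq.
- have [l pi_cvg l_ge0] := pi_crit pi' Ppi' pi'_proper.
  by exists l; rewrite // criterion_eq.
Qed.
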